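(* If $\pi$ is an irreducible permutation on a finite alphabet $\mathcal{A}$ with $\pi=\pi^{-1}$, then $\pi$ has at least $g(\pi)$ transpositions, i.e. the map $\pi_{\mathcal{A}}=\pi_0^{-1}\circ\pi_1$ has at least $g(\pi)$ orbits of size two.
   Context: $\pi=(\pi_0,\pi_1)$ with bijections $\pi_\varepsilon:\mathcal{A}\to\{1,\dots,d\}$, irreducible (no $k<d$ with $\pi_0^{-1}(\{1..k\})=\pi_1^{-1}(\{1..k\})$); $\pi^{-1}=(\pi_1,\pi_0)$. The genus $g(\pi)$ is $\tfrac12\mathrm{rank}(\Omega_\pi)$, where $(\Omega_\pi)_{\alpha,\beta}=1$ if $\pi_0(\alpha)<\pi_0(\beta)$ and $\pi_1(\alpha)>\pi_1(\beta)$, $-1$ if $\pi_0(\alpha)>\pi_0(\beta)$ and $\pi_1(\alpha)<\pi_1(\beta)$, $0$ otherwise (equivalently, the genus of any translation surface suspended over $\pi$). *)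

From mathcomp Require Import all_boot all_order all_algebra all_fingroup.
Set Implicit Arguments. Unset Strict Implicit. Unset Printing Implicit Defensive.
Import GRing.Theory Num.Theory.
Local Open Scope ring_scope.

(* A permutation pi = (pi0, pi1) on a finite alphabet A: two bijections
   A -> {1..d}, d = #|A|.  We use 0-based positions 'I_#|A|. *)
Definition is_perm_pair (A : finType) (pi0 pi1 : A -> 'I_#|A|) : Prop :=
  bijective pi0 /\ bijective pi1.

(* Irreducible: no 1 <= k < d with pi0^-1({1..k}) = pi1^-1({1..k}),
   i.e. (0-based) {a | pi0 a < k} = {a | pi1 a < k}. *)
Definition irreducible_pair (A : finType) (pi0 pi1 : A -> 'I_#|A|) : Prop :=
  forall k : nat, (0 < k)%N -> (k < #|A|)%N ->
    [set a | (pi0 a < k)%N] != [set a | (pi1 a < k)%N].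

(* pi = pi^{-1} where pi^{-1} = (pi1, pi0), equality up to renaming of the
   alphabet (the standard identification of permutations on alphabets):
   there is a bijection tau of A with (pi1, pi0) = (pi0 o tau, pi1 o tau)... *)
Definition self_inverse_pair (A : finType) (pi0 pi1 : A -> 'I_#|A|) : Prop :=
  exists tau : {perm A}, (forall a, pi1 (tau a) = pi0 a) /\ (forall a, pi0 (tau a) = pi1 a).

Definition Omega (A : finType) (pi0 pi1 : A -> 'I_#|A|) : 'M[rat]_#|A| :=
  \matrix_(i, j)
    let a := enum_val i in let b := enum_val j in
    if (pi0 a < pi0 b)%N && (pi1 b < pi1 a)%N then 1
    else if (pi0 b < pi0 a)%N && (pi1 a < pi1 b)%N then -1
    else 0.

Definition genus (A : finType) (pi0 pi1 : A -> 'I_#|A|) : nat :=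
  (\rank (Omega pi0 pi1))./2.

Definition n_transpositions (A : finType) (s : {perm A}) : nat :=
  #|[set O in porbits s | #|O| == 2%N]|.

From mathcomp Require Import all_boot all_order all_algebra all_fingroup.
From mathcomp Require Import ring.
Set Implicit Arguments. Unset Strict Implicit. Unset Printing Implicit Defensive.
Import GRing.Theory.
Local Open Scope ring_scope.

(* Since pi = pi^-1, the monodromy pi_A is an involution, and its permutation
   matrix P anticommutes with Omega.  Hence 2 Omega = (1 - P) Omega + Omega (1 - P)
   and rank Omega <= 2 rank (1 - P).  The rows e_i - e_(P i) of 1 - P vanish at
   fixed points and come in opposite pairs on 2-cycles, so rank (1 - P) is at most
   the number of 2-cycles. *)

Lemma porbit_involutive (T : finType) (s : {perm T}) (x : T) :
  involutive s -> porbit s x = [set x; s x].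
Proof.
move=> sK; apply/setP => y; rewrite !inE; apply/porbitP/idP.
  case=> i ->; rewrite permX; elim: i => [|i IH] /=; first by rewrite eqxx.
  by case/orP: IH => /eqP ->; rewrite ?sK eqxx ?orbT.
by case/orP => /eqP ->; [exists 0%N; rewrite expg0 perm1 | exists 1%N; rewrite expg1].
Qed.

Lemma n_transpositions_involutive (T : finType) (s : {perm T}) (r : T -> nat) :
  involutive s -> injective r ->
  n_transpositions s = #|[set x | (r x < r (s x))%N]|.
Proof.
move=> sK r_inj; rewrite /n_transpositions; set S := [set x | (r x < r (s x))%N].
have -> : [set O in porbits s | #|O| == 2%N] = porbit s @: S.
  apply/setP => O; rewrite inE; apply/andP/imsetP.
    case=> /imsetP [x _ ->]; rewrite porbit_involutive // cards2 eqSS => x_neq_sx.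
    case: (ltngtP (r x) (r (s x))) => [lt|gt|/r_inj eq]; last 1 first.
    - by rewrite -eq eqxx in x_neq_sx.
    - by exists x; rewrite ?inE // porbit_involutive.
    - exists (s x); first by rewrite inE sK.
      by rewrite !porbit_involutive // sK setUC.
  case=> x; rewrite inE => lt ->; split; first exact: imset_f.
  by rewrite porbit_involutive // cards2; case: (x =P s x) lt => [<-|//]; rewrite ltnn.
apply: card_in_imset => x y; rewrite !inE => lt_x lt_y.
rewrite !porbit_involutive // => Oxy.
have : y \in [set x; s x] by rewrite Oxy !inE eqxx.
rewrite !inE => /orP [/eqP -> //| /eqP y_sx].
by move: lt_y; rewrite y_sx sK ltnNge ltnW.
Qed.

Definition perm_enum (T : finType) (s : {perm T}) : 'S_#|T| :=
  perm (inj_comp (@enum_rank_inj T) (inj_comp (@perm_inj _ s) enum_val_inj)).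

Lemma perm_enumE (T : finType) (s : {perm T}) (i : 'I_#|T|) :
  perm_enum s i = enum_rank (s (enum_val i)).
Proof. by rewrite permE. Qed.

Lemma perm_enum_involutive (T : finType) (s : {perm T}) :
  involutive s -> involutive (perm_enum s).
Proof. by move=> sK i; rewrite !perm_enumE enum_rankK sK enum_valK. Qed.

Lemma n_transpositions_perm_enum (T : finType) (s : {perm T}) :
  involutive s -> n_transpositions (perm_enum s) = n_transpositions s.
Proof.
move=> sK; have rank_inj : injective (fun x : T => nat_of_ord (enum_rank x)).
  by move=> x y /val_inj/enum_rank_inj.
rewrite (n_transpositions_involutive (perm_enum_involutive sK) val_inj).
rewrite (n_transpositions_involutive sK rank_inj).
rewrite -(card_imset _ enum_val_inj); apply: eq_card => x.
rewrite -[x]enum_rankK mem_imset ?inE ?perm_enumE ?enum_valK //.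
exact: enum_val_inj.
Qed.

Lemma sum_indicator_in (R : pzSemiRingType) (T : finType) (S : {set T}) (c : T)
    (g : T -> R) :
  \sum_(x in S) (x == c)%:R * g x = if c \in S then g c else 0.
Proof.
rewrite big_mkcond (bigD1 c) //= big1 => [|x /negbTE xc].
  by case: ifP; rewrite ?eqxx ?mul1r ?addr0.
by rewrite xc mul0r; case: ifP.
Qed.

Lemma mxrank_anticomm (F : fieldType) (n : nat) (M P : 'M[F]_n) :
  2%:R != 0 :> F -> P *m M = - (M *m P) ->
  (\rank M <= (\rank (1%:M - P)%R).*2)%N.
Proof.
move=> two_nz PM.
have M2 : M *+ 2 = (1%:M - P) *m M + M *m (1%:M - P).
  by rewrite mulmxBl mulmxBr mul1mx mulmx1 PM opprK addrACA subrr addr0 mulr2n.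
rewrite -(mxrank_scale_nz M two_nz) scaler_nat M2 -addnn.
by apply: leq_trans (mxrank_add _ _) _; rewrite leq_add ?mxrankM_maxl ?mxrankM_maxr.
Qed.

Lemma perm_mx_anticomm (F : pzRingType) (n : nat) (s : 'S_n) (M : 'M[F]_n) :
  involutive s -> (forall i j, M (s i) (s j) = - M i j) ->
  perm_mx s *m M = - (M *m perm_mx s).
Proof.
move=> sK Ms; have sV : (s^-1)%g = s.
  by apply/permP => i; rewrite -{1}(sK i) permK.
rewrite -row_permE -[s in perm_mx s]sV -col_permE.
by apply/matrixP => i j; rewrite !mxE -{1}(sK j) Ms.
Qed.

Lemma mxrank_1_sub_perm_mx (F : fieldType) (n : nat) (s : 'S_n) :
  involutive s -> (\rank (1%:M - perm_mx s : 'M[F]_n)%R <= n_transpositions s)%N.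
Proof.
move=> sK; rewrite (n_transpositions_involutive sK val_inj).
set S := [set i : 'I_n | (i < s i)%N].
(* One coordinate per 2-cycle, indexed by its smaller point. *)
pose B : 'M[F]_(n, #|S|) :=
  \matrix_(i, k) ((enum_val k == i)%:R - (enum_val k == s i)%:R).
pose C : 'M[F]_(#|S|, n) :=
  \matrix_(k, j) ((enum_val k == j)%:R - (s (enum_val k) == j)%:R).
suff -> : 1%:M - perm_mx s = B *m C.
  exact: leq_trans (mxrankM_maxr _ _) (rank_leq_row _).
apply/matrixP => i j; rewrite !mxE.
transitivity (\sum_(x in S)
    ((x == i)%:R - (x == s i)%:R) * ((x == j)%:R - (s x == j)%:R) : F); last first.
  by rewrite big_enum_val; apply: eq_bigr => k _; rewrite !mxE.
under eq_bigr do rewrite mulrBl.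
rewrite sumrB !sum_indicator_in !inE sK eq_sym.
case: (ltngtP i (s i)) => [_|_|/val_inj si_i].
- by rewrite subr0.
- by rewrite sub0r opprB.
- by rewrite -si_i eq_sym !subrr.
Qed.

Lemma Omega_perm_enum (A : finType) (pi0 pi1 : A -> 'I_#|A|) (s : {perm A}) :
  (forall a, pi1 (s a) = pi0 a) -> (forall a, pi0 (s a) = pi1 a) ->
  forall i j, Omega pi0 pi1 (perm_enum s i) (perm_enum s j) = - Omega pi0 pi1 i j.
Proof.
move=> s1 s0 i j; rewrite !perm_enumE !mxE /= !enum_rankK !s0 !s1.
case: (ltngtP (pi0 (enum_val i)) (pi0 (enum_val j)));
  case: (ltngtP (pi1 (enum_val i)) (pi1 (enum_val j))); by rewrite /= ?opprK ?oppr0.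
Qed.

Lemma self_inverse_monodromy (A : finType) (pi0 pi1 : A -> 'I_#|A|) (piA : {perm A}) :
  injective pi0 -> (forall a, pi0 (piA a) = pi1 a) -> self_inverse_pair pi0 pi1 ->
  forall a, pi1 (piA a) = pi0 a.
Proof.
move=> pi0_inj piA0 [tau [tau1 tau0]] a.
have <- : tau a = piA a by apply: pi0_inj; rewrite tau0 piA0.
exact: tau1.
Qed.

Theorem mainTheorem9 (A : finType) (pi0 pi1 : A -> 'I_#|A|) (piA : {perm A}) :
  is_perm_pair pi0 pi1 ->
  irreducible_pair pi0 pi1 ->
  (forall a, pi0 (piA a) = pi1 a) ->
  self_inverse_pair pi0 pi1 ->
  (genus pi0 pi1 <= n_transpositions piA)%N.
Proof.
move=> [[pi0_inv pi0K _] _] _ piA0 self_inv.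
have pi0_inj : injective pi0 := can_inj pi0K.
have piA1 := self_inverse_monodromy pi0_inj piA0 self_inv.
have piAK : involutive piA by move=> a; apply: pi0_inj; rewrite piA0 piA1.
pose s := perm_enum piA; have sK : involutive s := perm_enum_involutive piAK.
have Omega_anticomm := perm_mx_anticomm sK (Omega_perm_enum piA1 piA0).
have two_nz : 2%:R != 0 :> rat by [].
rewrite /genus -(n_transpositions_perm_enum piAK).
apply: leq_trans (half_leq (mxrank_anticomm two_nz Omega_anticomm)) _.
by rewrite doubleK mxrank_1_sub_perm_mx.
Qed.
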